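(* Fix $\nu>1$, let $F_{\text{exist}}=\nu(\nu+1)$, $F_{\text{2d}}=\nu(\nu+1)/\sqrt{\nu^2+\nu-1}$, and $2<F<F_{\text{2d}}$. For $\theta\in[0,2\pi]$, $\mu\in\mathbb{R}$ define $$\ell_1(\theta,\mu)=\tfrac{\cos\theta F_{\text{exist}}+F}{FF_{\text{exist}}}\mu-\tfrac12\cos^2\theta-\tfrac F2\cos\theta-\tfrac12,\quad \ell_2(\theta,\mu)=-\tfrac{\cos\theta F_{\text{exist}}+F}{FF_{\text{exist}}}\mu-\tfrac12\cos^2\theta+\tfrac F2\cos\theta-\tfrac12,$$ $$\ell_3(\theta,\mu)=\tfrac{\mu}{F_{\text{exist}}}-\sin^2\theta-1,$$ and let $I$ be the open interval with endpoints $\frac{F^2}{2}-\frac{F^2}{F_{\text{exist}}}\mp\frac{F}{F_{\text{2d}}}\sqrt{F_{\text{2d}}^2-F^2}$. Then the midpoint $\mu_{L,opt}=\frac{F^2}{2}-\frac{F^2}{F_{\text{exist}}}$ of $I$ minimizes over $\mu\in I$ the quantity $\max_{\theta\in[0,2\pi]}\max\{\ell_1(\theta,\mu),\ell_2(\theta,\mu)\}$, and for all $\theta\in[0,2\pi]$, $$\ell_1(\theta,\mu_{L,opt}),\ \ell_2(\theta,\mu_{L,opt})\le\frac{F^2-F_{\text{2d}}^2}{2F_{\text{2d}}^2}<0,\qquad \ell_3(\theta,\mu_{L,opt})\le\frac{F_{\text{exist}}-2}{2F_{\text{exist}}^2}F^2-1<0.$$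
   Context: The functions $\ell_j(\theta,\mu)$ are the leading-order real parts of the three $\mu$-weighted dispersion relations at the upstream endstate of a hydraulic shock of the inviscid Saint-Venant equations in the limit $(k,\eta)=r(\cos\theta,\sin\theta)$, $r\to\infty$. *)

From Stdlib Require Import Reals Lra.
Open Scope R_scope.

Definition F_exist (nu : R) : R := nu * (nu + 1).
Definition F_2d (nu : R) : R := nu * (nu + 1) / sqrt (nu ^ 2 + nu - 1).

Definition ell1 (nu F theta mu : R) : R :=
  (cos theta * F_exist nu + F) / (F * F_exist nu) * mu
  - / 2 * (cos theta) ^ 2 - F / 2 * cos theta - / 2.
Definition ell2 (nu F theta mu : R) : R :=
  - ((cos theta * F_exist nu + F) / (F * F_exist nu)) * mu
  - / 2 * (cos theta) ^ 2 + F / 2 * cos theta - / 2.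
Definition ell3 (nu F theta mu : R) : R :=
  mu / F_exist nu - (sin theta) ^ 2 - 1.

Definition ell12 (nu F theta mu : R) : R := Rmax (ell1 nu F theta mu) (ell2 nu F theta mu).

Definition I_lo (nu F : R) : R :=
  F ^ 2 / 2 - F ^ 2 / F_exist nu - F / F_2d nu * sqrt (F_2d nu ^ 2 - F ^ 2).
Definition I_hi (nu F : R) : R :=
  F ^ 2 / 2 - F ^ 2 / F_exist nu + F / F_2d nu * sqrt (F_2d nu ^ 2 - F ^ 2).

Definition mu_L_opt (nu F : R) : R := F ^ 2 / 2 - F ^ 2 / F_exist nu.

(* With E := F_exist, F_2d^2 = E^2 / (E - 1), and at mu_L_opt the functions
   ell1 and ell2 become downward parabolas in cos theta, maximal at
   cos theta = -F/E resp. F/E; this yields the bounds.  At the critical angle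
   cos theta = -F/E the coefficient of mu in ell1 vanishes, so for every mu the
   maximum over theta of max(ell1, ell2) is at least the value attained there,
   which is the maximum at mu_L_opt. *)
From Stdlib Require Import Reals Lra.
Open Scope R_scope.

Section UpstreamDispersion.

Variable nu : R.
Hypothesis nu_gt1 : 1 < nu.

Local Notation E := (F_exist nu).

Lemma F_exist_gt2 : 2 < E.
Proof. unfold F_exist; nra. Qed.

Lemma F_2d_pos : 0 < F_2d nu.
Proof.
  unfold F_2d; apply Rdiv_lt_0_compat; [nra|].
  apply sqrt_lt_R0; nra.
Qed.

Lemma F_2d_sqr : F_2d nu ^ 2 = E ^ 2 / (E - 1).
Proof.
  assert (Hs : 0 < sqrt (nu ^ 2 + nu - 1)) by (apply sqrt_lt_R0; nra).
  assert (HE1 : E - 1 = sqrt (nu ^ 2 + nu - 1) ^ 2).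
  { rewrite <- Rsqr_pow2, Rsqr_sqrt by nra. unfold F_exist; ring. }
  unfold F_2d; fold E; rewrite HE1; field; lra.
Qed.

Variable F : R.
Hypothesis F_pos : 0 < F.
Hypothesis F_lt_F_2d : F < F_2d nu.

Lemma F_sqr_lt_F_2d_sqr : F ^ 2 < F_2d nu ^ 2.
Proof. pose proof F_2d_pos; nra. Qed.

Lemma F_lt_F_exist : F < E.
Proof.
  pose proof F_exist_gt2 as HE; pose proof F_sqr_lt_F_2d_sqr as HF.
  rewrite F_2d_sqr in HF.
  assert (Hle : E ^ 2 / (E - 1) <= E ^ 2).
  { apply Rmult_le_reg_r with (E - 1); [lra|].
    unfold Rdiv; rewrite Rmult_assoc, Rinv_l by lra; nra. }
  nra.
Qed.

Lemma bound12_eq :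
  (F ^ 2 - F_2d nu ^ 2) / (2 * F_2d nu ^ 2) = F ^ 2 * (E - 1) / (2 * E ^ 2) - / 2.
Proof. pose proof F_exist_gt2; rewrite F_2d_sqr; field; lra. Qed.

Lemma bound12_neg : (F ^ 2 - F_2d nu ^ 2) / (2 * F_2d nu ^ 2) < 0.
Proof.
  pose proof F_2d_pos; pose proof F_sqr_lt_F_2d_sqr.
  apply Rdiv_neg_pos; nra.
Qed.

Lemma bound3_neg : (E - 2) / (2 * E ^ 2) * F ^ 2 - 1 < 0.
Proof.
  pose proof F_exist_gt2 as HE; pose proof F_sqr_lt_F_2d_sqr as HF.
  rewrite F_2d_sqr in HF.
  (* (E - 2) F^2 < 2 (E - 1) F^2 < 2 E^2 *)
  assert (HF' : F ^ 2 * (E - 1) < E ^ 2).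
  { apply Rmult_lt_compat_r with (r := E - 1) in HF; [|lra].
    unfold Rdiv in HF; rewrite Rmult_assoc, Rinv_l in HF; lra. }
  replace ((E - 2) / (2 * E ^ 2) * F ^ 2 - 1)
    with (((E - 2) * F ^ 2 - 2 * E ^ 2) / (2 * E ^ 2)) by (field; lra).
  apply Rdiv_neg_pos; nra.
Qed.

Lemma ell1_mu_L_opt theta :
  ell1 nu F theta (mu_L_opt nu F)
  = - (cos theta + F / E) ^ 2 / 2 + (F ^ 2 - F_2d nu ^ 2) / (2 * F_2d nu ^ 2).
Proof.
  pose proof F_exist_gt2; rewrite bound12_eq.
  unfold ell1, mu_L_opt; field; lra.
Qed.

Lemma ell2_mu_L_opt theta :
  ell2 nu F theta (mu_L_opt nu F)
  = - (cos theta - F / E) ^ 2 / 2 - F ^ 2 * (E - 2) / E ^ 2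
    + (F ^ 2 - F_2d nu ^ 2) / (2 * F_2d nu ^ 2).
Proof.
  pose proof F_exist_gt2; rewrite bound12_eq.
  unfold ell2, mu_L_opt; field; lra.
Qed.

Lemma ell1_mu_L_opt_le theta :
  ell1 nu F theta (mu_L_opt nu F) <= (F ^ 2 - F_2d nu ^ 2) / (2 * F_2d nu ^ 2).
Proof. rewrite ell1_mu_L_opt; pose proof (pow2_ge_0 (cos theta + F / E)); lra. Qed.

Lemma ell2_mu_L_opt_le theta :
  ell2 nu F theta (mu_L_opt nu F) <= (F ^ 2 - F_2d nu ^ 2) / (2 * F_2d nu ^ 2).
Proof.
  pose proof F_exist_gt2.
  assert (0 <= F ^ 2 * (E - 2) / E ^ 2).
  { apply Rle_mult_inv_pos; [apply Rmult_le_pos | apply pow_lt]; nra. }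
  rewrite ell2_mu_L_opt; pose proof (pow2_ge_0 (cos theta - F / E)); lra.
Qed.

Lemma ell3_mu_L_opt_le theta :
  ell3 nu F theta (mu_L_opt nu F) <= (E - 2) / (2 * E ^ 2) * F ^ 2 - 1.
Proof.
  pose proof F_exist_gt2; pose proof (pow2_ge_0 (sin theta)).
  replace (ell3 nu F theta (mu_L_opt nu F))
    with ((E - 2) / (2 * E ^ 2) * F ^ 2 - sin theta ^ 2 - 1)
    by (unfold ell3, mu_L_opt; field; lra).
  lra.
Qed.

Lemma ell1_critical_angle theta mu : cos theta = - (F / E) ->
  ell1 nu F theta mu = (F ^ 2 - F_2d nu ^ 2) / (2 * F_2d nu ^ 2).
Proof.
  intros Hcos; pose proof F_exist_gt2.
  rewrite bound12_eq; unfold ell1; rewrite Hcos; field; lra.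
Qed.

Lemma critical_angle_exists :
  exists theta, 0 <= theta <= 2 * PI /\ cos theta = - (F / E).
Proof.
  pose proof F_exist_gt2; pose proof F_lt_F_exist.
  assert (HFE : 0 < F / E < 1).
  { split; [apply Rdiv_lt_0_compat; lra|].
    apply Rmult_lt_reg_r with E; [lra|].
    unfold Rdiv; rewrite Rmult_assoc, Rinv_l; lra. }
  exists (acos (- (F / E))).
  pose proof (acos_bound (- (F / E))); pose proof PI_RGT_0.
  split; [lra | apply cos_acos; lra].
Qed.

Lemma mu_L_opt_minimizes_max_ell12 mu theta :
  exists theta', 0 <= theta' <= 2 * PI /\
    ell12 nu F theta (mu_L_opt nu F) <= ell12 nu F theta' mu.
Proof.
  destruct critical_angle_exists as [theta' [Hrange Hcos]].
  exists theta'; split; [exact Hrange|].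
  unfold ell12.
  apply Rle_trans with (ell1 nu F theta' mu); [|apply Rmax_l].
  rewrite (ell1_critical_angle _ _ Hcos).
  apply Rmax_lub; [apply ell1_mu_L_opt_le | apply ell2_mu_L_opt_le].
Qed.

Lemma mu_L_opt_midpoint : mu_L_opt nu F = (I_lo nu F + I_hi nu F) / 2.
Proof. unfold I_lo, I_hi, mu_L_opt; lra. Qed.

Lemma mu_L_opt_in_I : I_lo nu F < mu_L_opt nu F < I_hi nu F.
Proof.
  pose proof F_2d_pos; pose proof F_sqr_lt_F_2d_sqr.
  assert (0 < F / F_2d nu * sqrt (F_2d nu ^ 2 - F ^ 2)).
  { apply Rmult_lt_0_compat;
      [apply Rdiv_lt_0_compat | apply sqrt_lt_R0]; lra. }
  unfold I_lo, I_hi, mu_L_opt; lra.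
Qed.

End UpstreamDispersion.

Theorem mainTheorem6 (nu F : R) :
  1 < nu -> 2 < F -> F < F_2d nu ->
  (* mu_L_opt is the midpoint of I and lies in I *)
  mu_L_opt nu F = (I_lo nu F + I_hi nu F) / 2 /\
  I_lo nu F < mu_L_opt nu F < I_hi nu F /\
  (* mu_L_opt minimizes mu |-> max_theta max(ell1, ell2) over I *)
  (forall mu, I_lo nu F < mu < I_hi nu F ->
     forall theta, 0 <= theta <= 2 * PI ->
       exists theta', 0 <= theta' <= 2 * PI /\
         ell12 nu F theta (mu_L_opt nu F) <= ell12 nu F theta' mu) /\
  (* bounds *)
  (forall theta, 0 <= theta <= 2 * PI ->
     ell1 nu F theta (mu_L_opt nu F) <= (F ^ 2 - F_2d nu ^ 2) / (2 * F_2d nu ^ 2) /\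
     ell2 nu F theta (mu_L_opt nu F) <= (F ^ 2 - F_2d nu ^ 2) / (2 * F_2d nu ^ 2) /\
     ell3 nu F theta (mu_L_opt nu F)
       <= (F_exist nu - 2) / (2 * F_exist nu ^ 2) * F ^ 2 - 1) /\
  (F ^ 2 - F_2d nu ^ 2) / (2 * F_2d nu ^ 2) < 0 /\
  (F_exist nu - 2) / (2 * F_exist nu ^ 2) * F ^ 2 - 1 < 0.
Proof.
  intros Hnu HF HFD.
  assert (HF0 : 0 < F) by lra.
  split; [apply mu_L_opt_midpoint|].
  split; [apply mu_L_opt_in_I; assumption|].
  (* the minimality holds for every mu, not only on I *)
  split; [intros mu _ theta _; apply mu_L_opt_minimizes_max_ell12; assumption|].
  split.
  { intros theta _.
    split; [apply ell1_mu_L_opt_le; assumption|].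
    split; [apply ell2_mu_L_opt_le; assumption|].
    apply ell3_mu_L_opt_le; assumption. }
  split; [apply bound12_neg | apply bound3_neg]; assumption.
Qed.
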